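(* If $V$ is a finite dimensional operator space, then the matrix unit ball of $V$ is operator compact.
   Context: The matrix unit ball of an operator space $V$ is the matrix set $(B_k)_k$ with $B_k$ the closed unit ball of $M_k(V)$. $\mathcal{K}$ denotes the compact operators on $\ell^2$ and $\mathcal{K}(V)=\mathcal{K}\check{\otimes}V$ the operator-space minimal tensor product (completion of $M_\infty(V)$, finitely supported infinite matrices over $V$). $\mathcal{T}$ is the trace class on $\ell^2$ as operator space dual of $\mathcal{K}$, $M_k(\mathcal{T})\cong\mathcal{CB}(\mathcal{K},M_k)$ with norm $\|\cdot\|_{\mathcal{T}}$, $M_\infty\subseteq\mathcal{T}$, and $(\sigma\otimes\mathrm{id})(x)\in M_k(V)$ is the slice map. A matrix set $\boldsymbol{X}=(X_k)$, $X_k\subseteq M_k(V)$, is operator compact if each $X_k$ is closed and there is $x\in\mathcal{K}(V)$ with $X_k\subseteq\overline{\{(\sigma\otimes\mathrm{id})(x):\sigma\in M_k(M_\infty),\|\sigma\|_{\mathcal{T}}\le1\}}$ for all $k$. *)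

From HB Require Import structures.
From mathcomp Require Import all_boot all_order all_algebra.
From mathcomp Require Import reals.
From mathcomp Require Import complex.
Set Implicit Arguments. Unset Strict Implicit. Unset Printing Implicit Defensive.
Import Order.TTheory GRing.Theory Num.Theory.
Local Open Scope ring_scope.

Section OpSpace.
Variable R : realType.
Local Notation C := (R[i]).
Variable V : vectType C.

Definition contraction m n (a : 'M[C]_(m, n)) : Prop :=
  forall v : 'cV[C]_n,
    \sum_(i < m) Normc.normc ((a *m v) i 0) ^+ 2 <= \sum_(j < n) Normc.normc (v j 0) ^+ 2.

(* a block matrix b = [b i j]_{i,j in I}, each block b i j a J x J complex
   matrix, i.e. an operator on C^I (x) C^J; bcontraction b : operator norm <= 1 *)
Definition bcontraction (I J : finType) (b : I -> I -> J -> J -> C) : Prop :=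
  forall v : I -> J -> C,
    \sum_(i : I) \sum_(p : J) Normc.normc (\sum_(j : I) \sum_(q : J) b i j p q * v j q) ^+ 2
    <= \sum_(j : I) \sum_(q : J) Normc.normc (v j q) ^+ 2.

Definition mxscale k (c : C) (x : 'M[V]_k) : 'M[V]_k := map_mx (fun v => c *: v) x.

Definition mxVmul m n (al : 'M[C]_(m, n)) (x : 'M[V]_n) (be : 'M[C]_(n, m)) : 'M[V]_m :=
  \matrix_(i < m, j < m) \sum_(p < n) \sum_(q < n) (al i p * be q j) *: x p q.

(* Ruan's axioms: nrm k is the norm on M_k(V) *)
Definition is_operator_space (nrm : forall k, 'M[V]_k -> R) : Prop :=
  (forall k (x : 'M[V]_k), 0 <= nrm k x) /\
  [/\ (forall k (x : 'M[V]_k), nrm k x = 0 -> x = 0),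
      (forall k (c : C) (x : 'M[V]_k), nrm k (mxscale c x) = Normc.normc c * nrm k x),
      (forall k (x y : 'M[V]_k), nrm k (x + y) <= nrm k x + nrm k y),
      (forall m n (al : 'M[C]_(m, n)) (x : 'M[V]_n) (be : 'M[C]_(n, m)),
          contraction al -> contraction be -> nrm m (mxVmul al x be) <= nrm n x) &
      (forall m n (x : 'M[V]_m) (y : 'M[V]_n),
          nrm (m + n)%N (block_mx x 0 0 y) = Num.max (nrm m x) (nrm n y))].

Definition mx_closure (nrm : forall k, 'M[V]_k -> R) k (S : 'M[V]_k -> Prop)
    (y : 'M[V]_k) : Prop :=
  forall e : R, 0 < e -> exists2 s, S s & nrm k (y - s) < e.

Definition mx_closed (nrm : forall k, 'M[V]_k -> R) k (S : 'M[V]_k -> Prop) : Prop :=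
  forall y, mx_closure nrm S y -> S y.

Definition mx_converges (nrm : forall k, 'M[V]_k -> R) k (u : nat -> 'M[V]_k)
    (y : 'M[V]_k) : Prop :=
  forall e : R, 0 < e -> exists M, forall m, (M <= m)%N -> nrm k (u m - y) < e.

Definition fsupp (T : zmodType) (n : nat) (f : nat -> nat -> T) : Prop :=
  forall p q, (n <= p)%N || (n <= q)%N -> f p q = 0.

Definition trunc (N : nat) (x : nat -> nat -> V) : 'M[V]_N := \matrix_(p < N, q < N) x p q.

(* a sequence in M_infty(V) (finitely supported), Cauchy for the norms of
   M_infty(V) = union of the M_N(V); such sequences represent elements of
   K(V) = completion of M_infty(V) *)
Definition KV_seq (nrm : forall k, 'M[V]_k -> R) (xs : nat -> nat -> nat -> V) : Prop :=
  (forall m, exists N, fsupp N (xs m)) /\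
  (forall e : R, 0 < e -> exists M, forall m m' N, (M <= m)%N -> (M <= m')%N ->
      nrm N (trunc N (xs m) - trunc N (xs m')) < e).

(* sigma in M_k(M_infty): sigma i j is a finitely supported infinite complex
   matrix.  ||sigma||_T <= 1 means the associated map
   phi_sigma : K -> M_k, a |-> [ <sigma i j, a> ]_{i,j},
   <s, a> = sum_{p,q} s p q * a p q, is completely contractive.  The
   amplifications are tested on the finitely supported (hence norm-dense in
   the unit ball) elements a of M_m(K), i.e. a in M_m(M_N). *)
Definition Tnorm_le1 k (sigma : 'I_k -> 'I_k -> nat -> nat -> C) : Prop :=
  forall (m N : nat) (a : 'I_m -> 'I_m -> 'I_N -> 'I_N -> C),
    bcontraction a ->
    bcontraction (fun (i j : 'I_m) (r s : 'I_k) =>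
                    \sum_(p < N) \sum_(q < N) sigma r s p q * a i j p q).

(* slice map (sigma (x) id)(x) in M_k(V) for sigma supported in {0..n-1}^2 *)
Definition slice k (n : nat) (sigma : 'I_k -> 'I_k -> nat -> nat -> C)
    (x : nat -> nat -> V) : 'M[V]_k :=
  \matrix_(i < k, j < k) \sum_(p < n) \sum_(q < n) sigma i j p q *: x p q.

Definition operator_compact (nrm : forall k, 'M[V]_k -> R)
    (X : forall k, 'M[V]_k -> Prop) : Prop :=
  (forall k, mx_closed nrm (X k)) /\
  exists xs : nat -> nat -> nat -> V, KV_seq nrm xs /\
    forall k (y : 'M[V]_k), X k y ->
      mx_closure nrm
        (fun z => exists n (sigma : 'I_k -> 'I_k -> nat -> nat -> C),
             [/\ (forall i j, fsupp n (sigma i j)), Tnorm_le1 sigma &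
                 mx_converges nrm (fun m => slice n sigma (xs m)) z])
        y.

Definition matrix_unit_ball (nrm : forall k, 'M[V]_k -> R) : forall k, 'M[V]_k -> Prop :=
  fun k x => nrm k x <= 1.

End OpSpace.

(* Fix a basis e_1, ..., e_d of V.  All norms on a finite dimensional space are
   equivalent, so the coordinate functionals are bounded on the first matrix
   level: |coord_l v| <= K ||v||_1.  For y in the unit ball of M_k(V), Ruan's
   axiom applied with a unit row and a unit column vector then shows that every
   scalar matrix [coord_l (y_rs)]_rs has operator norm at most K.
   Put c = d K + 1, x = diag(c e_1, ..., c e_d) ∈ M_d(V) ⊆ K(V) and
   sigma_rs = c^-1 diag(coord_1 y_rs, ..., coord_d y_rs).  Then
   (sigma ⊗ id)(x) = y exactly, and ||sigma||_T <= 1: paired with any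
   a in M_m(M_N), sigma gives a sum of d Kronecker products of a contraction
   (a compression of a) with a matrix of norm at most K / c. *)

From Pilot Require Import Defs.
From HB Require Import structures.
From mathcomp Require Import all_boot all_order all_algebra.
From mathcomp Require Import reals complex.
From mathcomp Require Import boolp classical_sets topology normedtype.
From mathcomp Require Import matrix_normedtype derive.
From mathcomp Require Import ring lra.
Set Implicit Arguments. Unset Strict Implicit. Unset Printing Implicit Defensive.
Import Order.TTheory GRing.Theory Num.Theory numFieldNormedType.Exports.
Local Open Scope ring_scope.

Lemma entry_le_mx_norm (R : realType) m n (x : 'M[R]_(m, n)) i j :
  `|x i j| <= `|x|.
Proof.
rewrite [`|x|]mx_normrE.
exact: (le_bigmax _ (fun ij : 'I_m * 'I_n => `|x ij.1 ij.2|) (i, j)).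
Qed.

Lemma klipschitz_continuous (R : realFieldType) (V W : normedModType R)
    (f : V -> W) (L : R) :
  0 <= L -> (forall a b, `|f a - f b| <= L * `|a - b|) -> continuous f.
Proof.
move=> L0 fL x; apply/cvgrPdist_lt => e e0.
have L1 : 0 < L + 1 by rewrite ltr_wpDl.
near=> y; apply: (le_lt_trans (fL x y)).
apply: (@le_lt_trans _ _ ((L + 1) * `|x - y|)); first by rewrite ler_wpM2r // lerDl.
rewrite -ltr_pdivlMl // mulrC; near: y.
by apply: cvgr_dist_lt; [exact: cvg_id | rewrite divr_gt0].
Unshelve. all: by end_near. Qed.

Section RowSeminorm.
Local Open Scope classical_set_scope.
Variables (R : realType) (n : nat) (f : 'rV[R]_n -> R).
Hypothesis fD : forall a b, f (a + b) <= f a + f b.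
Hypothesis fZ : forall (t : R) a, f (t *: a) = `|t| * f a.

Let f0 : f 0 = 0.
Proof. by rewrite -[0 : 'rV_n](scale0r 0) fZ normr0 mul0r. Qed.

Let fN a : f (- a) = f a.
Proof. by rewrite -scaleN1r fZ normrN1 mul1r. Qed.

Lemma rV_seminorm_ge0 a : 0 <= f a.
Proof. by have := fD a (- a); rewrite subrr f0 fN; lra. Qed.

Lemma rV_seminorm_ubound : exists2 L, 0 <= L & forall a, f a <= L * `|a|.
Proof.
exists (\sum_(j < n) f (delta_mx 0 j)) => [|a].
  by apply: sumr_ge0 => j _; exact: rV_seminorm_ge0.
rewrite {1}(row_sum_delta a) mulr_suml.
elim/big_ind2: _ => [|x1 x2 y1 y2 h1 h2|j _]; first by rewrite f0.
  by apply: le_trans (fD _ _) _; exact: lerD.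
by rewrite fZ mulrC ler_wpM2l ?rV_seminorm_ge0 ?entry_le_mx_norm.
Qed.

Lemma rV_seminorm_lipschitz : exists2 L, 0 <= L &
  forall a b, `|f a - f b| <= L * `|a - b|.
Proof.
have [L L0 fL] := rV_seminorm_ubound; exists L => // a b.
have fB a' b' : f a' - f b' <= L * `|a' - b'|.
  by have := fD (a' - b') b'; rewrite subrK; have := fL (a' - b'); lra.
by rewrite ler_norml fB andbT; have := fB b a; rewrite distrC; lra.
Qed.

Hypothesis f_eq0 : forall a, f a = 0 -> a = 0.

Lemma rV_norm_lbound : exists2 c, 0 < c & forall a, c * `|a| <= f a.
Proof.
have [L L0 /(klipschitz_continuous L0) fC] := rV_seminorm_lipschitz.
pose S := [set a : 'rV[R]_n | `|a| = 1].
have S_normalize a : a != 0 -> S (`|a|^-1 *: a).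
  by move=> a0; rewrite /S /= normrZ normfV normr_id mulVf ?normr_eq0.
have [S0|S_empty] := pselect (S !=set0); last first.
  exists 1 => // a; have [->|/S_normalize aS] := eqVneq a 0.
    by rewrite normr0 mulr0 rV_seminorm_ge0.
  by case: S_empty; exists (`|a|^-1 *: a).
have cS : compact S.
  apply: bounded_closed_compact.
    by exists 1; split => // M M1 a /= ->; exact: ltW.
  rewrite -[S]/(Num.norm @^-1` [set 1]).
  by apply: preimage_closed; [move=> x _; exact: norm_continuous | exact: closed_eq].
have [a0 /[!inE] a0S f_min] := EVT_min_rV S0 cS (continuous_subspaceT fC).
have fa0 : 0 < f a0.
  rewrite lt_def rV_seminorm_ge0 andbT; apply/eqP => /f_eq0 a00.
  by move: a0S; rewrite /S /= a00 normr0 => /eqP; rewrite eq_sym oner_eq0.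
exists (f a0) => // a; have [->|a_neq0] := eqVneq a 0.
  by rewrite normr0 mulr0 rV_seminorm_ge0.
have := f_min _ (mem_set (S_normalize _ a_neq0)).
by rewrite fZ normfV normr_id mulrC ler_pdivlMr ?normr_gt0.
Qed.

End RowSeminorm.

Local Open Scope complex_scope.

Section ComplexNorm.
Variable R : rcfType.
Local Notation C := R[i].
Local Notation normc := (@Normc.normc R).

Lemma normc_ge0 (z : C) : 0 <= normc z.
Proof. by case: z => a b; rewrite /= sqrtr_ge0. Qed.

Lemma normc_real (t : R) : normc t%:C = `|t|.
Proof. by rewrite /= expr0n /= addr0 sqrtr_sqr. Qed.

Lemma normc_conj (z : C) : normc z^* = normc z.
Proof. by case: z => a b; rewrite /= sqrrN. Qed.

Lemma mulJc (z : C) : z^* * z = (normc z ^+ 2)%:C.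
Proof.
case: z => a b; rewrite /= sqr_sqrtr ?addr_ge0 ?sqr_ge0 //.
by rewrite /real_complex_def; simpc; congr (_ +i* _); ring.
Qed.

Lemma sqr_normc_eq0 (z : C) : normc z ^+ 2 = 0 -> z = 0.
Proof. by move=> /eqP; rewrite expf_eq0 /= => /eqP /Normc.eq0_normc. Qed.

Lemma normc_le_ReIm (x y : R) : normc (x +i* y) <= `|x| + `|y|.
Proof.
have h : x ^+ 2 + y ^+ 2 <= (`|x| + `|y|) ^+ 2.
  rewrite sqrrD !real_normK ?num_real // -addrA lerD2l lerDr.
  by rewrite mulrn_wge0 // mulr_ge0.
by apply: le_trans (ler_wsqrtr h) _; rewrite sqrtr_sqr ger0_norm // addr_ge0.
Qed.

Lemma normc_sum (I : finType) (z : I -> C) :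
  normc (\sum_i z i) <= \sum_i normc (z i).
Proof.
elim/big_ind2: _ => [|x1 x2 y1 y2 h1 h2|//]; first by rewrite Normc.normc0.
by apply: le_trans (le_normcD _ _) _; exact: lerD.
Qed.

(* Lagrange's identity: the defect is a sum of squares. *)
Lemma real_CauchySchwarz (I : finType) (a b : I -> R) :
  (\sum_i a i * b i) ^+ 2 <= (\sum_i a i ^+ 2) * (\sum_i b i ^+ 2).
Proof.
have prodE (f g : I -> R) : (\sum_i f i) * (\sum_j g j) = \sum_i \sum_j f i * g j.
  by rewrite mulr_suml; apply: eq_bigr => i _; rewrite mulr_sumr.
have : 0 <= \sum_i \sum_j (a i * b j - a j * b i) ^+ 2.
  by apply: sumr_ge0 => i _; apply: sumr_ge0 => j _; exact: sqr_ge0.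
have -> : \sum_i \sum_j (a i * b j - a j * b i) ^+ 2 =
    \sum_i \sum_j a i ^+ 2 * b j ^+ 2 + \sum_i \sum_j a j ^+ 2 * b i ^+ 2
    - 2 * \sum_i \sum_j (a i * b i) * (a j * b j).
  rewrite mulr_sumr -big_split -sumrB /=; apply: eq_bigr => i _.
  by rewrite mulr_sumr -big_split -sumrB /=; apply: eq_bigr => j _; ring.
rewrite [in X in _ + X - _]exchange_big /= -!prodE -expr2; lra.
Qed.

Lemma normc_CauchySchwarz (I : finType) (u v : I -> C) :
  normc (\sum_i u i * v i) ^+ 2
    <= (\sum_i normc (u i) ^+ 2) * (\sum_i normc (v i) ^+ 2).
Proof.
apply: le_trans (real_CauchySchwarz (normc \o u) (normc \o v)).
have nn_ge0 : 0 <= \sum_i normc (u i) * normc (v i).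
  by apply: sumr_ge0 => i _; rewrite mulr_ge0 ?normc_ge0.
rewrite lerXn2r ?nnegrE ?normc_ge0 //.
apply: le_trans (normc_sum _) _.
by apply: ler_sum => i _; rewrite Normc.normcM.
Qed.

Lemma sqr_normc_sum_le (I : finType) (z : I -> C) :
  normc (\sum_i z i) ^+ 2 <= #|I|%:R * \sum_i normc (z i) ^+ 2.
Proof.
have := normc_CauchySchwarz (fun=> 1) z.
by under eq_bigr do rewrite mul1r; rewrite Normc.normc1 expr1n sumr_const.
Qed.

End ComplexNorm.

Section OperatorNorm.
Variable R : realType.
Local Notation C := R[i].
Local Notation normc := (@Normc.normc R).

Definition opnorm_le (I : finType) (K : R) (M : I -> I -> C) : Prop :=
  forall v : I -> C,
    \sum_i normc (\sum_j M i j * v j) ^+ 2 <= K ^+ 2 * \sum_j normc (v j) ^+ 2.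

Definition bopnorm_le (I J : finType) (K : R) (b : I -> I -> J -> J -> C) : Prop :=
  forall v : I -> J -> C,
    \sum_i \sum_p normc (\sum_j \sum_q b i j p q * v j q) ^+ 2
      <= K ^+ 2 * \sum_j \sum_q normc (v j q) ^+ 2.

Lemma sum_sqr_normc_ge0 (I : finType) (v : I -> C) : 0 <= \sum_i normc (v i) ^+ 2.
Proof. by apply: sumr_ge0 => i _; exact: sqr_ge0. Qed.

Lemma bcontractionW (I J : finType) (K : R) (b : I -> I -> J -> J -> C) :
  0 <= K <= 1 -> bopnorm_le K b -> bcontraction b.
Proof.
move=> /andP[K0 K1] bK v; apply: le_trans (bK v) _.
rewrite ler_piMl ?expr_le1 //.
by apply: sumr_ge0 => j _; exact: sum_sqr_normc_ge0.
Qed.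

Lemma bcontraction_entry (I J : finType) (a : I -> I -> J -> J -> C) (p q : J) :
  bcontraction a -> opnorm_le 1 (fun i j => a i j p q).
Proof.
move=> a1 v; have := a1 (fun j q' => if q' == q then v j else 0).
have E i p' : \sum_j \sum_q' a i j p' q' * (if q' == q then v j else 0)
    = \sum_j a i j p' q * v j.
  apply: eq_bigr => j _; rewrite (bigD1 q) //= eqxx big1 ?addr0 //.
  by move=> q' /negbTE ->; rewrite mulr0.
have E2 j : \sum_q' normc (if q' == q then v j else 0) ^+ 2 = normc (v j) ^+ 2.
  rewrite (bigD1 q) //= eqxx big1 ?addr0 //.
  by move=> q' /negbTE ->; rewrite Normc.normc0 expr0n.
under eq_bigr do under eq_bigr do rewrite E.
under [X in _ <= X -> _]eq_bigr do rewrite E2.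
rewrite expr1n mul1r; apply: le_trans; apply: ler_sum => i _.
by rewrite (bigD1 p) //= lerDl; apply: sumr_ge0 => ? _; exact: sqr_ge0.
Qed.

Lemma opnorm_le_scale (I : finType) (K : R) (M : I -> I -> C) (lam : C) :
  opnorm_le K M -> opnorm_le (K * normc lam) (fun i j => M i j * lam).
Proof.
move=> MK v.
have E i : \sum_j M i j * lam * v j = lam * \sum_j M i j * v j.
  by rewrite mulr_sumr; apply: eq_bigr => j _; ring.
under eq_bigr do rewrite E Normc.normcM exprMn.
by rewrite -mulr_sumr exprMn [leRHS]mulrAC [leLHS]mulrC ler_wpM2r ?sqr_ge0.
Qed.

Lemma bopnorm_le_kron (I J : finType) (K1 K2 : R) (B : I -> I -> C) (A : J -> J -> C) :
  opnorm_le K1 B -> opnorm_le K2 A ->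
  bopnorm_le (K1 * K2) (fun i j p q => B i j * A p q).
Proof.
move=> BK AK v; pose u j p := \sum_q A p q * v j q.
have E i p : \sum_j \sum_q B i j * A p q * v j q = \sum_j B i j * u j p.
  by apply: eq_bigr => j _; rewrite /u mulr_sumr; apply: eq_bigr => q _; rewrite mulrA.
under eq_bigr do under eq_bigr do rewrite E.
rewrite exchange_big /=.
apply: (@le_trans _ _ (\sum_p K1 ^+ 2 * \sum_j normc (u j p) ^+ 2)).
  by apply: ler_sum => p _; exact: BK.
rewrite -mulr_sumr exchange_big /= exprMn -[leRHS]mulrA ler_wpM2l ?sqr_ge0 //.
rewrite mulr_sumr; apply: ler_sum => j _; exact: AK.
Qed.

Lemma bopnorm_le_sum (I J P : finType) (K : R) (b : P -> I -> I -> J -> J -> C) :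
  (forall p, bopnorm_le K (b p)) ->
  bopnorm_le (#|P|%:R * K) (fun i j r s => \sum_p b p i j r s).
Proof.
move=> bK v.
have E i r : \sum_j \sum_s (\sum_p b p i j r s) * v j s
    = \sum_p \sum_j \sum_s b p i j r s * v j s.
  rewrite [RHS]exchange_big /=; apply: eq_bigr => j _.
  by rewrite [RHS]exchange_big /=; apply: eq_bigr => s _; rewrite mulr_suml.
under eq_bigr do under eq_bigr do rewrite E.
apply: (@le_trans _ _ (\sum_i \sum_r #|P|%:R *
    \sum_p normc (\sum_j \sum_s b p i j r s * v j s) ^+ 2)).
  by apply: ler_sum => i _; apply: ler_sum => r _; exact: sqr_normc_sum_le.
under eq_bigr do rewrite -mulr_sumr.
rewrite -mulr_sumr exprMn expr2 -!mulrA ler_wpM2l //.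
under eq_bigr do rewrite exchange_big /=.
rewrite exchange_big /=.
apply: (@le_trans _ _ (\sum_(p : P) K ^+ 2 * \sum_j \sum_s normc (v j s) ^+ 2)).
  by apply: ler_sum => p _; exact: bK.
by rewrite sumr_const [K * (K * _)]mulrA -expr2 mulr_natl.
Qed.

Lemma sum_sqr_normc_normalize (I : finType) (v : I -> C) :
  let X := \sum_i normc (v i) ^+ 2 in
  0 < X -> \sum_i normc (v i / (Num.sqrt X)%:C) ^+ 2 = 1.
Proof.
move=> X X_gt0; under eq_bigr do rewrite Normc.normcM Normc.normcV normc_real exprMn.
rewrite -mulr_suml -/X exprVn ger0_norm ?sqrtr_ge0 // sqr_sqrtr ?ltW //.
by rewrite mulfV ?gt_eqF.
Qed.

Lemma opnorm_le_bilinear (I : finType) (K : R) (M : I -> I -> C) :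
  0 <= K ->
  (forall u v : I -> C,
      \sum_i normc (u i) ^+ 2 <= 1 -> \sum_j normc (v j) ^+ 2 <= 1 ->
      normc (\sum_i \sum_j u i * M i j * v j) <= K) ->
  opnorm_le K M.
Proof.
move=> K0 MK v; pose w i := \sum_j M i j * v j.
change (\sum_i normc (w i) ^+ 2 <= K ^+ 2 * \sum_j normc (v j) ^+ 2).
set t := \sum_i _; set X := \sum_j _.
have [t_le0|t_gt0] := lerP t 0.
  by apply: le_trans t_le0 _; rewrite mulr_ge0 ?sqr_ge0 ?sum_sqr_normc_ge0.
have X_gt0 : 0 < X.
  rewrite lt_def sum_sqr_normc_ge0 andbT; apply: contraTneq t_gt0 => X0.
  have v0 j : v j = 0.
    by apply/sqr_normc_eq0/(psumr_eq0P (fun j _ => sqr_ge0 _) X0).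
  rewrite /t big1 ?ltxx // => i _.
  by rewrite /w big1 ?Normc.normc0 ?expr0n // => j _; rewrite v0 mulr0.
pose st := Num.sqrt t; pose sX := Num.sqrt X.
have st_gt0 : 0 < st by rewrite sqrtr_gt0.
have sX_gt0 : 0 < sX by rewrite sqrtr_gt0.
have u1 : \sum_i normc ((w i)^* / st%:C) ^+ 2 <= 1.
  under eq_bigr do rewrite Normc.normcM normc_conj -Normc.normcM.
  by rewrite sum_sqr_normc_normalize.
have v1 : \sum_j normc (v j / sX%:C) ^+ 2 <= 1.
  by rewrite sum_sqr_normc_normalize.
have := MK _ _ u1 v1.
have -> : \sum_i \sum_j (w i)^* / st%:C * M i j * (v j / sX%:C) = (st / sX)%:C.
  transitivity ((\sum_i (w i)^* * w i) / (st * sX)%:C).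
    rewrite mulr_suml; apply: eq_bigr => i _; rewrite /w mulr_sumr mulr_suml.
    by apply: eq_bigr => j _; rewrite rmorphM invfM; ring.
  under eq_bigr do rewrite mulJc.
  rewrite -rmorph_sum -fmorph_div; congr (_%:C); change (t / (st * sX) = st / sX).
  by rewrite -[t](sqr_sqrtr (ltW t_gt0)) -/st; field; rewrite !gt_eqF.
rewrite (normc_real (st / sX)) ger0_norm ?divr_ge0 ?(ltW sX_gt0) ?(ltW st_gt0) //.
rewrite ler_pdivrMr // => st_le.
rewrite -[t](sqr_sqrtr (ltW t_gt0)) -[X](sqr_sqrtr (ltW X_gt0)) -exprMn.
by rewrite lerXn2r ?nnegrE ?mulr_ge0 ?sqrtr_ge0.
Qed.

Lemma contraction_row k (u : 'I_k -> C) :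
  \sum_r normc (u r) ^+ 2 <= 1 -> Defs.contraction (\row_r u r).
Proof.
move=> u1 w; rewrite big_ord1 mxE.
apply: le_trans (normc_CauchySchwarz _ _) _; rewrite ler_piMl ?sum_sqr_normc_ge0 //.
by under eq_bigr do rewrite mxE.
Qed.

Lemma contraction_col k (v : 'I_k -> C) :
  \sum_s normc (v s) ^+ 2 <= 1 -> Defs.contraction (\col_s v s).
Proof.
move=> v1 w; rewrite big_ord1.
under eq_bigr do rewrite mxE big_ord1 mxE Normc.normcM exprMn.
by rewrite -mulr_suml ler_piMl ?sqr_ge0.
Qed.

End OperatorNorm.

Section OperatorSpace.
Variables (R : realType) (V : vectType R[i]) (nrm : forall k, 'M[V]_k -> R).
Arguments nrm : clear implicits.
Hypothesis nrm_os : is_operator_space nrm.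
Local Notation C := R[i].
Local Notation normc := (@Normc.normc R).
Local Notation d := (\dim (fullv : {vspace V})).
Local Notation bs := (vbasis (fullv : {vspace V})).

Lemma nrm_eq0 k (x : 'M[V]_k) : nrm k x = 0 -> x = 0.
Proof. by case: nrm_os => _ [h _ _ _ _]; exact: h. Qed.

Lemma nrm_mxscale k (c : C) (x : 'M[V]_k) : nrm k (mxscale c x) = normc c * nrm k x.
Proof. by case: nrm_os => _ [_ h _ _ _]; exact: h. Qed.

Lemma ler_nrmD k (x y : 'M[V]_k) : nrm k (x + y) <= nrm k x + nrm k y.
Proof. by case: nrm_os => _ [_ _ h _ _]; exact: h. Qed.

Lemma nrm_mxVmul_le m n (al : 'M[C]_(m, n)) (x : 'M[V]_n) (be : 'M[C]_(n, m)) :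
  Defs.contraction al -> Defs.contraction be -> nrm m (mxVmul al x be) <= nrm n x.
Proof. by case: nrm_os => _ [_ _ _ h _]; exact: h. Qed.

Lemma nrm0 k : nrm k 0 = 0.
Proof.
have -> : 0 = mxscale 0 (0 : 'M[V]_k) by apply/matrixP => i j; rewrite !mxE scale0r.
by rewrite nrm_mxscale Normc.normc0 mul0r.
Qed.

Lemma mx_closure_mem k (S : 'M[V]_k -> Prop) y : S y -> mx_closure nrm S y.
Proof. by move=> Sy e e_gt0; exists y; rewrite // subrr nrm0. Qed.

Lemma mx_converges_cst k (y : 'M[V]_k) : mx_converges nrm (fun=> y) y.
Proof. by move=> e e_gt0; exists 0%N => m _; rewrite subrr nrm0. Qed.

Lemma KV_seq_cst N (x : nat -> nat -> V) : fsupp N x -> KV_seq nrm (fun=> x).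
Proof.
by move=> xN; split=> [_|e e_gt0]; [exists N | exists 0%N => *; rewrite subrr nrm0].
Qed.

Lemma matrix_unit_ball_closed (k : nat) : mx_closed nrm (matrix_unit_ball nrm (k:=k)).
Proof.
move=> y y_cl; rewrite /matrix_unit_ball; case: (lerP (nrm k y) 1) => // y_gt1.
have [|s s1 ys] := y_cl (nrm k y - 1); first by rewrite subr_gt0.
move: s1; rewrite /matrix_unit_ball => s1.
by have := ler_nrmD s (y - s); rewrite addrC subrK; lra.
Qed.

Lemma mxscale_const (c : C) (v : V) : mxscale c (const_mx v : 'M_1) = const_mx (c *: v).
Proof. exact: map_const_mx. Qed.

Definition rV_coord (a : 'rV[R]_(d + d)) (l : 'I_d) : C :=
  a 0 (lshift d l) +i* a 0 (rshift d l).

Definition vec_of_rV (a : 'rV[R]_(d + d)) : V := \sum_l rV_coord a l *: bs`_l.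

Lemma coord_vec_of_rV a l : coord bs l (vec_of_rV a) = rV_coord a l.
Proof. exact: coord_sum_free (basis_free (vbasisP fullv)). Qed.

Lemma vec_of_rV_onto (v : V) : exists a, vec_of_rV a = v.
Proof.
exists (row_mx (\row_j complex.Re (coord bs j v)) (\row_j complex.Im (coord bs j v))).
rewrite [RHS](coord_vbasis (memvf v)); apply: eq_bigr => l _.
by rewrite /rV_coord row_mxEl row_mxEr !mxE; case: (coord bs l v).
Qed.

Lemma nrm_vec_of_rV_lbound : exists2 c, 0 < c &
  forall a, c * `|a| <= nrm 1 (const_mx (vec_of_rV a)).
Proof.
apply: rV_norm_lbound => [a b|t a|a].
- have -> : vec_of_rV (a + b) = vec_of_rV a + vec_of_rV b.
    rewrite -big_split; apply: eq_bigr => l _.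
    have -> : rV_coord (a + b) l = rV_coord a l + rV_coord b l.
      by rewrite /rV_coord !mxE.
    exact: scalerDl.
  have -> : const_mx (vec_of_rV a + vec_of_rV b) =
      const_mx (vec_of_rV a) + const_mx (vec_of_rV b) :> 'M_1.
    by apply/matrixP => i j; rewrite !mxE.
  exact: ler_nrmD.
- have -> : vec_of_rV (t *: a) = t%:C *: vec_of_rV a.
    rewrite scaler_sumr; apply: eq_bigr => l _; rewrite scalerA /rV_coord !mxE.
    by congr (_ *: _); rewrite /real_complex_def; simpc.
  by rewrite -mxscale_const nrm_mxscale normc_real.
- move=> /nrm_eq0 /matrixP /(_ 0 0); rewrite !mxE => a0.
  have coord0 l : rV_coord a l = 0 by rewrite -coord_vec_of_rV a0 linear0.
  apply/rowP => i; rewrite mxE.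
  by case: (split_ordP i) => l ->; have [] := coord0 l.
Qed.

Lemma coord_bound : exists2 K, 0 < K &
  forall (l : 'I_d) (v : V), normc (coord bs l v) <= K * nrm 1 (const_mx v).
Proof.
have [c c_gt0 c_le] := nrm_vec_of_rV_lbound.
exists (2 / c) => [|l v]; first by rewrite divr_gt0.
have [a <-] := vec_of_rV_onto v.
rewrite coord_vec_of_rV; apply: le_trans (normc_le_ReIm _ _) _.
apply: (@le_trans _ _ (2 * `|a|)).
  by rewrite mulr2n mulrDl mul1r; apply: lerD; exact: entry_le_mx_norm.
by rewrite -mulrA ler_wpM2l // ler_pdivlMl.
Qed.

End OperatorSpace.

Section InfiniteDiagonal.
Variables (T : zmodType) (n : nat) (f : 'I_n -> T).

(* The infinite matrix diag(f 0, ..., f (n-1), 0, 0, ...). *)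
Definition diag_inf (p q : nat) : T :=
  \sum_(l < n | (l == p :> nat) && (l == q :> nat)) f l.

Lemma fsupp_diag_inf : fsupp n diag_inf.
Proof.
move=> p q pq; apply: big1 => l /andP[/eqP lp /eqP lq].
by move: pq; rewrite -lp -lq leqNgt ltn_ord.
Qed.

Lemma diag_inf_ord (p q : 'I_n) : diag_inf p q = if p == q then f p else 0.
Proof.
case: eqP => [<-|pq]; first by rewrite /diag_inf (big_pred1 p) // => l; rewrite andbb.
rewrite /diag_inf big_pred0 // => l; apply/negP => /andP[/eqP lp /eqP lq].
by apply: pq; apply: val_inj; rewrite /= -lp -lq.
Qed.

End InfiniteDiagonal.

Lemma sum_diag_inf_mulr (T : pzRingType) n (f : 'I_n -> T) N (a : 'I_N -> 'I_N -> T) :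
  \sum_(p < N) \sum_(q < N) diag_inf f p q * a p q
    = \sum_(l < n) f l * (if insub (val l) is Some p then a p p else 0).
Proof.
under eq_bigr do under eq_bigr do rewrite /diag_inf mulr_suml big_mkcond /=.
under eq_bigr do rewrite exchange_big /=.
rewrite exchange_big /=; apply: eq_bigr => l _.
case: insubP => [p0 _ p0l|l_ge]; last first.
  rewrite mulr0; apply: big1 => p _; apply: big1 => q _.
  by case: eqP => //= lp; move: l_ge; rewrite lp ltn_ord.
rewrite (bigD1 p0) //= [X in _ + X]big1 ?addr0 => [|p p_p0]; last first.
  by apply: big1 => q _; rewrite -p0l (inj_eq val_inj) eq_sym (negbTE p_p0).
rewrite (bigD1 p0) //= -p0l eqxx big1 ?addr0 // => q q_p0.
by rewrite (inj_eq val_inj) eq_sym (negbTE q_p0) andbF.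
Qed.

Section CoordinateFunctional.
Variables (R : realType) (V : vectType R[i]) (nrm : forall k, 'M[V]_k -> R).
Arguments nrm : clear implicits.
Hypothesis nrm_os : is_operator_space nrm.
Local Notation C := R[i].
Local Notation normc := (@Normc.normc R).
Local Notation d := (\dim (fullv : {vspace V})).
Local Notation bs := (vbasis (fullv : {vspace V})).
Variable K : R.
Hypothesis K_ge0 : 0 <= K.
Hypothesis coord_le : forall l v, normc (coord bs l v) <= K * nrm 1 (const_mx v).

Lemma coord_opnorm_le k (y : 'M[V]_k) (l : 'I_d) :
  nrm k y <= 1 -> opnorm_le K (fun r s => coord bs l (y r s)).
Proof.
move=> y1; apply: opnorm_le_bilinear => // u v u1 v1.
pose w := mxVmul (\row_r u r) y (\col_s v s).
have -> : \sum_r \sum_s u r * coord bs l (y r s) * v s = coord bs l (w 0 0).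
  rewrite /w mxE linear_sum; apply: eq_bigr => r _.
  by rewrite linear_sum; apply: eq_bigr => s _; rewrite linearZ !mxE mulrAC.
apply: le_trans (coord_le _ _) _.
have -> : const_mx (w 0 0) = w by apply/matrixP => i j; rewrite !ord1 mxE.
rewrite -[leRHS]mulr1 ler_wpM2l //; apply: le_trans y1.
by apply: (nrm_mxVmul_le nrm_os); [exact: contraction_row | exact: contraction_col].
Qed.

(* Any c > d K works; the 1 keeps c positive when V = 0. *)
Let c := d%:R * K + 1.

Let c_gt0 : 0 < c. Proof. by rewrite ltr_wpDl // mulr_ge0. Qed.

Definition scaled_basis : nat -> nat -> V := diag_inf (fun l : 'I_d => c%:C *: bs`_l).

Definition coord_functional k (y : 'M[V]_k) (r s : 'I_k) : nat -> nat -> C :=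
  diag_inf (fun l : 'I_d => coord bs l (y r s) / c%:C).

Lemma slice_coord_functional k (y : 'M[V]_k) :
  slice d (coord_functional y) scaled_basis = y.
Proof.
apply/matrixP => r s; rewrite mxE [RHS](coord_vbasis (memvf (y r s))).
apply: eq_bigr => p _; rewrite (bigD1 p) //= big1 ?addr0 => [|q qp]; last first.
  by rewrite /coord_functional diag_inf_ord eq_sym (negbTE qp) scale0r.
rewrite /coord_functional /scaled_basis !diag_inf_ord eqxx scalerA divfK //.
by rewrite -(rmorph0 (real_complex R)) (inj_eq (@complexI R)) gt_eqF.
Qed.

Lemma Tnorm_coord_functional k (y : 'M[V]_k) :
  nrm k y <= 1 -> Tnorm_le1 (coord_functional y).
Proof.
move=> y1 m N a a1.
pose B (l : 'I_d) i j : C :=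
  if insub (val l) : option 'I_N is Some p then a i j p p else 0.
pose A (l : 'I_d) r s : C := coord bs l (y r s) / c%:C.
have -> : (fun i j r s =>
    \sum_(p < N) \sum_(q < N) coord_functional y r s p q * a i j p q)
    = (fun i j r s => \sum_l B l i j * A l r s).
  apply/funext => i; apply/funext => j; apply/funext => r; apply/funext => s.
  by rewrite sum_diag_inf_mulr; apply: eq_bigr => l _; rewrite mulrC.
have KC_ge0 : 0 <= K * normc c%:C^-1 by rewrite mulr_ge0 ?normc_ge0.
apply: (@bcontractionW _ _ _ (#|'I_d|%:R * (1 * (K * normc c%:C^-1)))).
  rewrite card_ord mul1r mulr_ge0 // Normc.normcV normc_real gtr0_norm //.
  by rewrite andTb mulrA ler_pdivrMr // mul1r lerDl.
apply: (bopnorm_le_sum (b := fun l i j r s => B l i j * A l r s)) => l.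
apply: bopnorm_le_kron; last first.
  exact/opnorm_le_scale/coord_opnorm_le.
rewrite /B; case: insub => [p|]; first exact: bcontraction_entry.
move=> v; rewrite big1 => [|i _]; first by rewrite mulr_ge0 ?sqr_ge0 ?sum_sqr_normc_ge0.
by rewrite big1 ?Normc.normc0 ?expr0n // => j _; rewrite mul0r.
Qed.

End CoordinateFunctional.

Theorem corollary6p2 (R : realType) (V : vectType (R[i]))
    (nrm : forall k, 'M[V]_k -> R) :
  is_operator_space nrm ->
  operator_compact nrm (matrix_unit_ball nrm).
Proof.
move=> nrm_os; split=> [k|]; first exact: matrix_unit_ball_closed.
have [K K_gt0 coord_le] := coord_bound nrm_os.
have K_ge0 := ltW K_gt0.
exists (fun=> scaled_basis V K); split.
  exact/(KV_seq_cst nrm_os)/fsupp_diag_inf.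
move=> k y y1; apply: (mx_closure_mem nrm_os).
exists (\dim (fullv : {vspace V})), (coord_functional K y); split.
- by move=> r s; exact: fsupp_diag_inf.
- exact: (Tnorm_coord_functional nrm_os K_ge0 coord_le).
- by rewrite slice_coord_functional //; exact: mx_converges_cst.
Qed.
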